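(* Let $v$ be a floating-point value (zero or a normal IEEE 754 double) with $\alpha = DP(v) \le 22$ and $\beta = DS(v) \le 15$. For each integer $i \ge 0$ let $\varepsilon_i = |v \otimes 10^{i} - round(v \otimes 10^{i})|$ and $\mu_i = |v \otimes 10^{i}| \times 2^{-52}$ (these two quantities being evaluated exactly on the double $v \otimes 10^i$). Then $\varepsilon_i > \mu_i$ for every $i \in \{0, 1, \dots, \alpha - 1\}$, and $\varepsilon_\alpha \le \mu_\alpha$.
   Context: Convention: a floating-point value $v$ is identified with the decimal number given by its decimal format $DF(v)$, i.e. its shortest decimal representation that reads back to $v$. For a nonzero terminating decimal $x$, $DP(x)$ is the least nonnegative integer $j$ with $x \times 10^j$ an integer, and $DS(x) = DP(x) + \lfloor \log_{10}|x|\rfloor + 1$; $DP(0)=DS(0)=0$. $v \otimes 10^{i}$ denotes the product computed in IEEE 754 double-precision arithmetic (round-to-nearest), with $10^i$ represented as a double. $round(\cdot)$ denotes rounding to the nearest integer. *)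

From Stdlib Require Import Reals ZArith.
Open Scope R_scope.

(* floor of a real: IZR (up x) is the least integer > x, so floor x = up x - 1 *)
Definition Zfloor (x : R) : Z := (up x - 1)%Z.

Definition bpow2 (e : Z) : R := powerRZ 2 e.
Definition pow10 (e : Z) : R := powerRZ 10 e.

Definition is_double (x : R) : Prop :=
  exists m e : Z, x = IZR m * bpow2 e /\ (Z.abs m < 2 ^ 53)%Z /\
                  (-1074 <= e <= 971)%Z.

Definition is_zero_or_normal_double (x : R) : Prop :=
  is_double x /\ (x = 0 \/ bpow2 (-1022) <= Rabs x).

(* binary magnitude: mag x = floor(log2 |x|) + 1, i.e. 2^(mag x - 1) <= |x| < 2^(mag x) *)
Definition mag2 (x : R) : Z := (Zfloor (ln (Rabs x) / ln 2) + 1)%Z.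

(* canonical exponent of the binary64 format (precision 53, subnormals down to 2^-1074) *)
Definition cexp (x : R) : Z := Z.max (mag2 x - 53) (-1074).

Definition Znearest_even (m : R) : Z :=
  let f := Zfloor m in
  if Rlt_dec (m - IZR f) (/2) then f
  else if Rlt_dec (/2) (m - IZR f) then (f + 1)%Z
  else if Z.even f then f else (f + 1)%Z.

(* IEEE 754 round-to-nearest-even into binary64 (no upper exponent bound;
   overflow never occurs in the situations considered) *)
Definition round_ne (x : R) : R :=
  let e := cexp x in IZR (Znearest_even (x * bpow2 (- e))) * bpow2 e.

Definition double_pow10 (i : nat) : R := round_ne (10 ^ i).

Definition fmul_pow10 (v : R) (i : nat) : R := round_ne (v * double_pow10 i).

(* round(.) to nearest integer (tie rule is irrelevant for |y - round y|) *)
Definition round_int (y : R) : Z := Zfloor (y + /2).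

Definition eps_i (v : R) (i : nat) : R :=
  Rabs (fmul_pow10 v i - IZR (round_int (fmul_pow10 v i))).

Definition mu_i (v : R) (i : nat) : R :=
  Rabs (fmul_pow10 v i) * bpow2 (-52).

Definition DF_candidate (v : R) (k : nat) (s n : Z) (x : R) : Prop :=
  (1 <= k)%nat /\
  (10 ^ (Z.of_nat k - 1) <= Z.abs s < 10 ^ Z.of_nat k)%Z /\
  x = IZR s * pow10 (n - Z.of_nat k) /\
  round_ne x = v.

(* x = DF(v): the shortest decimal reading back to v (ECMAScript
   Number::toString convention): minimal number k of significant digits;
   among those, the closest to v; on an exact tie, the one with even s. *)
Definition is_DF (v x : R) : Prop :=
  (v = 0 /\ x = 0) \/
  (v <> 0 /\
   exists (k : nat) (s n : Z),
     DF_candidate v k s n x /\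
     (forall k' s' n' y, DF_candidate v k' s' n' y -> (k <= k')%nat) /\
     (forall s' n' y, DF_candidate v k s' n' y -> Rabs (x - v) <= Rabs (y - v)) /\
     (forall s' n' y, DF_candidate v k s' n' y -> y <> x ->
                      Rabs (y - v) = Rabs (x - v) -> Z.even s = true)).

Definition is_DP (x : R) (j : nat) : Prop :=
  (exists z : Z, x * 10 ^ j = IZR z) /\
  (forall j' : nat, (j' < j)%nat -> ~ exists z : Z, x * 10 ^ j' = IZR z).

Definition DS_of (x : R) (j : nat) : Z :=
  if Req_EM_T x 0 then 0%Z
  else (Z.of_nat j + Zfloor (ln (Rabs x) / ln 10) + 1)%Z.

(** Write x = DF(v) as S * 10^-alpha with S an integer, 0 < |S| < 10^15, and
    10 not dividing S (minimality of alpha).  For i <= 22 the double 10^i is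
    exact, so v (x) 10^i is the correctly rounded value of y = v * 10^i, and y
    is within relative error u = 2^-53 of x * 10^i.
    For i = alpha, x * 10^alpha = S is an integer below 2^53, hence a point of
    the binary grid on which y is rounded: the computed product is within one
    grid step of S, and one grid step is at most |v (x) 10^alpha| * 2^-52.
    For i < alpha, x * 10^i is at distance at least 10^(i-alpha) from every
    integer, whereas the rounding errors add up to about 4u|y|, with
    |y| < 10^15 * 10^(i-alpha) and 4u * 10^15 < 1/2: the computed product stays
    farther than |v (x) 10^i| * 2^-52 from every integer. *)
From Pilot Require Import Defs.
From Stdlib Require Import Reals ZArith Lra Lia.
Open Scope R_scope.

Local Notation u := (bpow2 (-53)).

(* [Zfloor] alone would denote Stdlib's [Reals.Zfloor.Zfloor]. *)
Lemma Zfloor_spec t : IZR (Defs.Zfloor t) <= t < IZR (Defs.Zfloor t) + 1.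
Proof.
  unfold Defs.Zfloor. destruct (archimed t) as [H1 H2].
  rewrite minus_IZR. simpl. lra.
Qed.

Lemma Zfloor_unique t n : IZR n <= t < IZR n + 1 -> Defs.Zfloor t = n.
Proof.
  intros [H1 H2]. unfold Defs.Zfloor.
  rewrite <- (tech_up t (n + 1)); [lia | |]; rewrite plus_IZR; simpl; lra.
Qed.

Lemma bpow2_Rpower e : bpow2 e = Rpower 2 (IZR e).
Proof. apply powerRZ_Rpower. lra. Qed.

Lemma bpow2_pos e : 0 < bpow2 e.
Proof. apply powerRZ_lt. lra. Qed.

Lemma bpow2_plus a b : bpow2 (a + b) = bpow2 a * bpow2 b.
Proof. apply powerRZ_add. lra. Qed.

Lemma bpow2_opp_l e : bpow2 (- e) * bpow2 e = 1.
Proof. rewrite <- bpow2_plus, Z.add_opp_diag_l. reflexivity. Qed.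

Lemma bpow2_le a b : (a <= b)%Z -> bpow2 a <= bpow2 b.
Proof.
  intros H. rewrite !bpow2_Rpower. apply Rle_Rpower; [lra | now apply IZR_le].
Qed.

Lemma bpow2_lt_inv a b : bpow2 a < bpow2 b -> (a < b)%Z.
Proof.
  intros H. destruct (Z_lt_le_dec a b) as [| Hba]; [assumption |].
  apply bpow2_le in Hba. lra.
Qed.

Lemma bpow2_IZR k : (0 <= k)%Z -> bpow2 k = IZR (2 ^ k).
Proof.
  intros Hk. rewrite <- (Z2Nat.id k Hk).
  unfold bpow2. rewrite <- pow_powerRZ, pow_IZR. reflexivity.
Qed.

Lemma bpow2_pred e : bpow2 e = 2 * bpow2 (e - 1).
Proof.
  replace e with (1 + (e - 1))%Z at 1 by lia.
  rewrite bpow2_plus. unfold bpow2 at 1. simpl. ring.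
Qed.

Lemma bpow2_m52 : bpow2 (-52) = 2 * u.
Proof. rewrite (bpow2_pred (-52)). reflexivity. Qed.

Lemma bpow2_m53 : u = / 9007199254740992.
Proof. unfold bpow2. simpl. lra. Qed.

Lemma mag2_spec y : y <> 0 -> bpow2 (mag2 y - 1) <= Rabs y < bpow2 (mag2 y).
Proof.
  intros Hy. unfold mag2. set (L := ln (Rabs y) / ln 2).
  assert (Hln2 : 0 < ln 2) by (rewrite <- ln_1; apply ln_increasing; lra).
  assert (Hy2 : Rabs y = Rpower 2 L).
  { unfold Rpower, L. replace (ln (Rabs y) / ln 2 * ln 2) with (ln (Rabs y)) by (field; lra).
    rewrite exp_ln; [reflexivity | now apply Rabs_pos_lt]. }
  destruct (Zfloor_spec L) as [H1 H2].
  rewrite Z.add_simpl_r, !bpow2_Rpower, plus_IZR, Hy2. split.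
  - apply Rle_Rpower; lra.
  - apply Rpower_lt; lra.
Qed.

Lemma mag2_le y e : y <> 0 -> Rabs y < bpow2 e -> (mag2 y <= e)%Z.
Proof.
  intros Hy H. destruct (mag2_spec y Hy) as [H1 _].
  enough (mag2 y - 1 < e)%Z by lia. apply bpow2_lt_inv. lra.
Qed.

Lemma mag2_gt y e : y <> 0 -> bpow2 e <= Rabs y -> (e < mag2 y)%Z.
Proof.
  intros Hy H. destruct (mag2_spec y Hy) as [_ H1]. apply bpow2_lt_inv. lra.
Qed.

Lemma normal_neq_0 y : bpow2 (-1022) <= Rabs y -> y <> 0.
Proof.
  intros H ->. rewrite Rabs_R0 in H. pose proof (bpow2_pos (-1022)). lra.
Qed.

Lemma cexp_normal y : bpow2 (-1022) <= Rabs y -> cexp y = (mag2 y - 53)%Z.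
Proof.
  intros H. pose proof (mag2_gt y _ (normal_neq_0 y H) H). unfold cexp. lia.
Qed.

Lemma Znearest_even_nearest t n : Rabs (IZR (Znearest_even t) - t) <= Rabs (IZR n - t).
Proof.
  destruct (Zfloor_spec t) as [H1 H2].
  assert (Hn : IZR n <= IZR (Defs.Zfloor t) \/ IZR (Defs.Zfloor t) + 1 <= IZR n).
  { destruct (Z_le_gt_dec n (Defs.Zfloor t)) as [Hn | Hn]; [left | right].
    - now apply IZR_le.
    - rewrite <- plus_IZR. apply IZR_le. lia. }
  unfold Znearest_even.
  destruct (Rlt_dec (t - IZR (Defs.Zfloor t)) (/2)); [| destruct (Rlt_dec (/2) (t - IZR (Defs.Zfloor t)))];
    [| | destruct (Z.even (Defs.Zfloor t))];
    rewrite ?plus_IZR; unfold Rabs; repeat destruct Rcase_abs; lra.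
Qed.

Lemma Znearest_even_half t : Rabs (IZR (Znearest_even t) - t) <= / 2.
Proof.
  destruct (Zfloor_spec t) as [H1 H2].
  destruct (Rle_dec (t - IZR (Defs.Zfloor t)) (/2)).
  - eapply Rle_trans; [apply (Znearest_even_nearest t (Defs.Zfloor t)) |].
    unfold Rabs; destruct Rcase_abs; lra.
  - eapply Rle_trans; [apply (Znearest_even_nearest t (Defs.Zfloor t + 1)) |].
    rewrite plus_IZR. unfold Rabs; destruct Rcase_abs; lra.
Qed.

Lemma Znearest_even_IZR n : Znearest_even (IZR n) = n.
Proof.
  pose proof (Znearest_even_half (IZR n)) as H.
  rewrite <- minus_IZR, <- abs_IZR in H.
  enough (Z.abs (Znearest_even (IZR n) - n) < 1)%Z by lia.
  apply lt_IZR. lra.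
Qed.

Lemma Znearest_even_abs_ge t N : IZR N <= Rabs t -> (N <= Z.abs (Znearest_even t))%Z.
Proof.
  intros H. pose proof (Znearest_even_half t) as Hh.
  enough (Hlt : IZR (N - 1) < IZR (Z.abs (Znearest_even t))) by (apply lt_IZR in Hlt; lia).
  rewrite minus_IZR, abs_IZR. pose proof (Rabs_triang_inv t (IZR (Znearest_even t))).
  rewrite Rabs_minus_sym in Hh. lra.
Qed.

Lemma bpow2_scale_sub y z e : z * bpow2 e - y = (z - y * bpow2 (- e)) * bpow2 e.
Proof. rewrite Rmult_minus_distr_r, Rmult_assoc, bpow2_opp_l. ring. Qed.

Lemma round_ne_error y : Rabs (round_ne y - y) <= bpow2 (cexp y) / 2.
Proof.
  unfold round_ne. rewrite bpow2_scale_sub, Rabs_mult, (Rabs_pos_eq (bpow2 _)).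
  - pose proof (Znearest_even_half (y * bpow2 (- cexp y))).
    pose proof (bpow2_pos (cexp y)). nra.
  - apply Rlt_le, bpow2_pos.
Qed.

Lemma round_ne_id y M e :
  y = IZR M * bpow2 e -> (Z.abs M < 2 ^ 53)%Z -> (-1074 <= e)%Z -> round_ne y = y.
Proof.
  intros Hy HM He.
  destruct (Z.eq_dec M 0) as [-> | HM0].
  { rewrite Hy, Rmult_0_l. unfold round_ne.
    rewrite Rmult_0_l, Znearest_even_IZR. apply Rmult_0_l. }
  assert (Hy0 : y <> 0).
  { rewrite Hy. apply Rmult_integral_contrapositive.
    split; [now apply not_0_IZR | apply Rgt_not_eq, bpow2_pos]. }
  assert (Hc : (cexp y <= e)%Z).
  { enough (mag2 y <= e + 53)%Z by (unfold cexp; lia).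
    apply mag2_le; [assumption |].
    rewrite Hy, Rabs_mult, (Rabs_pos_eq (bpow2 e)), Z.add_comm, bpow2_plus
      by apply Rlt_le, bpow2_pos.
    rewrite (bpow2_IZR 53), <- abs_IZR by lia.
    apply Rmult_lt_compat_r; [apply bpow2_pos | now apply IZR_lt]. }
  assert (Ht : y * bpow2 (- cexp y) = IZR (M * 2 ^ (e - cexp y))).
  { rewrite mult_IZR, <- bpow2_IZR, Hy, Rmult_assoc, <- bpow2_plus by lia.
    reflexivity. }
  unfold round_ne. rewrite Ht, Znearest_even_IZR, <- Ht, Rmult_assoc, bpow2_opp_l.
  apply Rmult_1_r.
Qed.

Lemma round_ne_0 : round_ne 0 = 0.
Proof. apply (round_ne_id 0 0 0); [simpl; ring | reflexivity | lia]. Qed.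

Lemma round_ne_abs_ge y :
  bpow2 (-1022) <= Rabs y -> bpow2 (mag2 y - 1) <= Rabs (round_ne y).
Proof.
  intros Hn. set (c := cexp y).
  assert (Hc : (mag2 y - 1 = 52 + c)%Z) by (unfold c; rewrite (cexp_normal y Hn); lia).
  destruct (mag2_spec y (normal_neq_0 y Hn)) as [Hm _].
  rewrite Hc, bpow2_plus in Hm.
  assert (Ht : IZR (2 ^ 52) <= Rabs (y * bpow2 (- c))).
  { rewrite <- bpow2_IZR, Rabs_mult, (Rabs_pos_eq (bpow2 (- c))) by (lia || apply Rlt_le, bpow2_pos).
    apply (Rmult_le_reg_r (bpow2 c)); [apply bpow2_pos |].
    rewrite Rmult_assoc, bpow2_opp_l, Rmult_1_r. exact Hm. }
  apply Znearest_even_abs_ge, IZR_le in Ht. rewrite abs_IZR in Ht.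
  unfold round_ne. fold c.
  rewrite Rabs_mult, (Rabs_pos_eq (bpow2 c)), Hc, bpow2_plus, bpow2_IZR
    by (lia || apply Rlt_le, bpow2_pos).
  apply Rmult_le_compat_r; [apply Rlt_le, bpow2_pos | exact Ht].
Qed.

Lemma ulp_normal y : bpow2 (-1022) <= Rabs y -> bpow2 (cexp y) = u * bpow2 (mag2 y).
Proof. intros Hn. rewrite (cexp_normal y Hn), <- bpow2_plus. f_equal. lia. Qed.

Lemma round_ne_rel_error y :
  bpow2 (-1022) <= Rabs y ->
  Rabs (round_ne y - y) <= u * Rabs y /\ Rabs (round_ne y - y) <= u * Rabs (round_ne y).
Proof.
  intros Hn. pose proof (round_ne_error y) as He.
  rewrite (ulp_normal y Hn), (bpow2_pred (mag2 y)) in He.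
  pose proof (proj1 (mag2_spec y (normal_neq_0 y Hn))).
  pose proof (round_ne_abs_ge y Hn). pose proof (bpow2_pos (-53)).
  split; nra.
Qed.

Lemma round_ne_normal y : bpow2 (-1022) <= Rabs y -> bpow2 (-1022) <= Rabs (round_ne y).
Proof.
  intros Hn. eapply Rle_trans; [| apply (round_ne_abs_ge y Hn)].
  apply bpow2_le. pose proof (mag2_gt y _ (normal_neq_0 y Hn) Hn). lia.
Qed.

Lemma round_int_nearest w n : Rabs (w - IZR (round_int w)) <= Rabs (w - IZR n).
Proof.
  unfold round_int. destruct (Zfloor_spec (w + /2)) as [H1 H2].
  set (r := Defs.Zfloor (w + /2)) in *.
  destruct (Z_le_gt_dec n (r - 1)) as [Hn | Hn]; [| destruct (Z_le_gt_dec n r) as [Hn' | Hn']].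
  - apply IZR_le in Hn. rewrite minus_IZR in Hn.
    unfold Rabs; repeat destruct Rcase_abs; lra.
  - replace n with r by lia. lra.
  - assert (Hn'' : (r + 1 <= n)%Z) by lia. apply IZR_le in Hn''. rewrite plus_IZR in Hn''.
    unfold Rabs; repeat destruct Rcase_abs; lra.
Qed.

Lemma round_int_IZR n : round_int (IZR n) = n.
Proof. apply Zfloor_unique. lra. Qed.

Lemma double_pow10_exact i : (i <= 22)%nat -> double_pow10 i = 10 ^ i.
Proof.
  intros Hi. apply (round_ne_id _ (5 ^ Z.of_nat i) (Z.of_nat i)).
  - unfold bpow2. rewrite <- pow_powerRZ, <- pow_IZR, <- Rpow_mult_distr.
    f_equal. lra.
  - rewrite Z.abs_eq by (apply Z.pow_nonneg; lia).
    apply Z.le_lt_trans with (5 ^ 22)%Z; [apply Z.pow_le_mono_r; lia | reflexivity].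
  - lia.
Qed.

Lemma fmul_pow10_exact v i : (i <= 22)%nat -> fmul_pow10 v i = round_ne (v * 10 ^ i).
Proof. intros Hi. unfold fmul_pow10. now rewrite double_pow10_exact. Qed.

Lemma grid_dist_le g m n :
  0 < g -> Rabs (IZR m * g - IZR n * g) < 2 * g -> Rabs (IZR m * g - IZR n * g) <= g.
Proof.
  intros Hg. rewrite <- Rmult_minus_distr_r, <- minus_IZR, Rabs_mult, (Rabs_pos_eq g), <- abs_IZR
    by lra.
  intros H. assert (Hmn : IZR (Z.abs (m - n)) < 2) by (apply (Rmult_lt_reg_r g); lra).
  apply lt_IZR in Hmn. assert (Hle : IZR (Z.abs (m - n)) <= 1) by (apply IZR_le; lia).
  nra.
Qed.

(* As |y| < 2^53, the integer S lies on the grid on which y is rounded. *)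
Lemma round_ne_near_int y S :
  bpow2 (-1022) <= Rabs y -> Rabs y < bpow2 53 -> Rabs (y - IZR S) <= u * Rabs y ->
  Rabs (round_ne y - IZR (round_int (round_ne y))) <= Rabs (round_ne y) * bpow2 (-52).
Proof.
  intros Hn Hy53 HyS. set (w := round_ne y). set (c := cexp y). set (g := bpow2 c).
  assert (Hg : 0 < g) by apply bpow2_pos.
  assert (Hc : (c <= 0)%Z).
  { pose proof (mag2_le y 53 (normal_neq_0 y Hn) Hy53). unfold c. rewrite (cexp_normal y Hn). lia. }
  assert (HS : IZR (S * 2 ^ (- c)) * g = IZR S).
  { rewrite mult_IZR, <- bpow2_IZR, Rmult_assoc, bpow2_opp_l by lia. apply Rmult_1_r. }
  assert (Hw : w = IZR (Znearest_even (y * bpow2 (- c))) * g) by reflexivity.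
  assert (HwS : Rabs (w - IZR S) <= g).
  { rewrite <- HS, Hw. apply grid_dist_le; [exact Hg |]. rewrite <- Hw, HS.
    destruct (round_ne_rel_error y Hn) as [Hwy _]. fold w in Hwy.
    destruct (mag2_spec y (normal_neq_0 y Hn)) as [_ Hm].
    pose proof (ulp_normal y Hn) as Hu. fold c g in Hu.
    assert (Rabs (w - IZR S) <= Rabs (w - y) + Rabs (y - IZR S)).
    { replace (w - IZR S) with (w - y + (y - IZR S)) by ring. apply Rabs_triang. }
    pose proof (bpow2_pos (-53)). nra. }
  assert (Hgw : g <= Rabs w * bpow2 (-52)).
  { unfold g, c. rewrite (ulp_normal y Hn), (bpow2_pred (mag2 y)), bpow2_m52.
    pose proof (round_ne_abs_ge y Hn) as Hwm. fold w in Hwm.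
    pose proof (bpow2_pos (-53)). nra. }
  pose proof (round_int_nearest w S). lra.
Qed.

(* The margin is u |y| for the rounding of y plus 2u (1 + u) |y|, which
   bounds 2u |round_ne y|. *)
Lemma round_ne_far_from_int y :
  bpow2 (-1022) <= Rabs y ->
  (forall r : Z, u * (3 + 2 * u) * Rabs y < Rabs (y - IZR r)) ->
  Rabs (round_ne y) * bpow2 (-52) < Rabs (round_ne y - IZR (round_int (round_ne y))).
Proof.
  intros Hn Hfar. set (w := round_ne y). set (r := round_int w).
  destruct (round_ne_rel_error y Hn) as [Hwy _]. fold w in Hwy.
  specialize (Hfar r).
  assert (Rabs (y - IZR r) - Rabs (w - y) <= Rabs (w - IZR r)).
  { rewrite (Rabs_minus_sym w y).
    replace (w - IZR r) with (y - IZR r - (y - w)) by ring. apply Rabs_triang_inv. }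
  pose proof (Rabs_triang_inv w y).
  rewrite bpow2_m52. pose proof (bpow2_pos (-53)). pose proof (Rabs_pos y). nra.
Qed.

Section ScaledDecimal.

Variables (x v : R) (alpha : nat) (S : Z).
Hypothesis Hv : round_ne x = v.
Hypothesis HxS : x * 10 ^ alpha = IZR S.
Hypothesis HS0 : S <> 0%Z.
Hypothesis HS15 : (Z.abs S < 10 ^ 15)%Z.
Hypothesis Halpha : (alpha <= 22)%nat.

Lemma abs_decimal_scaled : Rabs x * 10 ^ alpha = IZR (Z.abs S).
Proof.
  rewrite abs_IZR, <- HxS, Rabs_mult, (Rabs_pos_eq (10 ^ alpha)) by (apply pow_le; lra).
  reflexivity.
Qed.

Lemma decimal_normal : bpow2 (-1022) <= Rabs x.
Proof.
  assert (H1 : 1 <= Rabs x * 10 ^ 22).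
  { apply Rle_trans with (Rabs x * 10 ^ alpha).
    - rewrite abs_decimal_scaled. apply IZR_le. lia.
    - apply Rmult_le_compat_l; [apply Rabs_pos | apply Rle_pow; [lra | exact Halpha]]. }
  assert (H100 : bpow2 (-100) * 10 ^ 22 <= 1) by (unfold bpow2; simpl; lra).
  pose proof (bpow2_le (-1022) (-100) ltac:(lia)). pose proof (bpow2_pos (-1022)).
  nra.
Qed.

Lemma rounded_decimal_error : Rabs (v - x) <= u * Rabs v.
Proof. rewrite <- Hv. apply round_ne_rel_error, decimal_normal. Qed.

Lemma scaled_rounded_normal i : bpow2 (-1022) <= Rabs (v * 10 ^ i).
Proof.
  rewrite Rabs_mult, (Rabs_pos_eq (10 ^ i)) by (apply pow_le; lra).
  rewrite <- (Rmult_1_r (bpow2 _)). apply Rmult_le_compat.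
  - apply Rlt_le, bpow2_pos.
  - lra.
  - rewrite <- Hv. apply round_ne_normal, decimal_normal.
  - apply pow_R1_Rle. lra.
Qed.

Lemma scaled_rounded_error i : Rabs (v * 10 ^ i - x * 10 ^ i) <= u * Rabs (v * 10 ^ i).
Proof.
  rewrite <- Rmult_minus_distr_r, !Rabs_mult, (Rabs_pos_eq (10 ^ i)), <- Rmult_assoc
    by (apply pow_le; lra).
  apply Rmult_le_compat_r; [apply pow_le; lra | apply rounded_decimal_error].
Qed.

Lemma eps_le_mu_at_DP : eps_i v alpha <= mu_i v alpha.
Proof.
  unfold eps_i, mu_i. rewrite fmul_pow10_exact by exact Halpha.
  apply (round_ne_near_int _ S);
    [apply scaled_rounded_normal | | rewrite <- HxS; apply scaled_rounded_error].
  pose proof (scaled_rounded_error alpha) as Herr. rewrite HxS in Herr.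
  pose proof (Rabs_triang_inv (v * 10 ^ alpha) (IZR S)) as Htri.
  rewrite <- abs_IZR in Htri. pose proof (IZR_lt _ _ HS15) as H15.
  rewrite (bpow2_IZR 53) by lia. rewrite bpow2_m53 in Herr. simpl in H15 |- *. lra.
Qed.

Lemma decimal_gap i r :
  (i < alpha)%nat -> ~ (10 | S)%Z -> 1 <= Rabs (x * 10 ^ i - IZR r) * 10 ^ (alpha - i).
Proof.
  intros Hi Hndvd.
  rewrite <- (Rabs_pos_eq (10 ^ (alpha - i))), <- Rabs_mult by (apply pow_le; lra).
  replace ((x * 10 ^ i - IZR r) * 10 ^ (alpha - i))
    with (IZR (S - r * 10 ^ Z.of_nat (alpha - i))).
  2: { rewrite minus_IZR, mult_IZR, <- pow_IZR, <- HxS.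
       replace alpha with (i + (alpha - i))%nat at 1 by lia. rewrite pow_add. ring. }
  rewrite <- abs_IZR. apply IZR_le.
  enough (S - r * 10 ^ Z.of_nat (alpha - i) <> 0)%Z by lia.
  intros E. apply Hndvd. exists (r * 10 ^ (Z.of_nat (alpha - i) - 1))%Z.
  replace (Z.of_nat (alpha - i)) with (Z.succ (Z.of_nat (alpha - i) - 1)) in E by lia.
  rewrite Z.pow_succ_r in E by lia. lia.
Qed.

Lemma mu_lt_eps_below_DP i : (i < alpha)%nat -> ~ (10 | S)%Z -> mu_i v i < eps_i v i.
Proof.
  intros Hi Hndvd. unfold eps_i, mu_i. rewrite fmul_pow10_exact by lia.
  apply round_ne_far_from_int; [apply scaled_rounded_normal | intros r].
  set (y := v * 10 ^ i). set (T := x * 10 ^ i). set (K := 10 ^ (alpha - i)).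
  assert (HK : 0 < K) by (apply pow_lt; lra).
  pose proof (decimal_gap i r Hi Hndvd) as Hgap. fold T K in Hgap.
  assert (HTK : Rabs T * K < 10 ^ 15).
  { unfold T, K. rewrite Rabs_mult, (Rabs_pos_eq (10 ^ i)), Rmult_assoc, <- pow_add
      by (apply pow_le; lra).
    replace (i + (alpha - i))%nat with alpha by lia. rewrite abs_decimal_scaled.
    apply IZR_lt in HS15. simpl in HS15 |- *. lra. }
  pose proof (scaled_rounded_error i) as Herr. fold y T in Herr.
  assert (Rabs y - Rabs T <= u * Rabs y) by (pose proof (Rabs_triang_inv y T); lra).
  assert (Rabs (T - IZR r) - Rabs (y - T) <= Rabs (y - IZR r)).
  { rewrite (Rabs_minus_sym y T).
    replace (y - IZR r) with (T - IZR r - (T - y)) by ring. apply Rabs_triang_inv. }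
  assert (u * (4 + 2 * u) * (Rabs y * K) < 1).
  { assert (Rabs y * K * (1 - u) <= Rabs T * K) by (rewrite bpow2_m53 in *; nra).
    rewrite bpow2_m53 in *. lra. }
  assert (u * (4 + 2 * u) * Rabs y < Rabs (T - IZR r)) by nra.
  lra.
Qed.

End ScaledDecimal.

Lemma is_DP_0 j : is_DP 0 j -> j = 0%nat.
Proof.
  intros [_ Hmin]. destruct j as [| j]; [reflexivity | exfalso].
  apply (Hmin 0%nat); [lia |]. exists 0%Z. ring.
Qed.

Lemma is_DP_not_dvd x j S :
  is_DP x j -> x * 10 ^ j = IZR S -> (0 < j)%nat -> ~ (10 | S)%Z.
Proof.
  intros [_ Hmin] HxS Hj [z Hz]. destruct j as [| j]; [lia |].
  apply (Hmin j); [lia |]. exists z. apply (Rmult_eq_reg_r 10); [| lra].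
  rewrite Rmult_assoc, (Rmult_comm (10 ^ j)), tech_pow_Rmult, HxS, Hz, mult_IZR.
  reflexivity.
Qed.

Lemma DS_of_bound x j S :
  x <> 0 -> x * 10 ^ j = IZR S -> (DS_of x j <= 15)%Z -> (Z.abs S < 10 ^ 15)%Z.
Proof.
  intros Hx0 HxS HDS. unfold DS_of in HDS.
  destruct (Req_EM_T x 0) as [E | _]; [contradiction |].
  set (L := ln (Rabs x) / ln 10) in HDS.
  destruct (Zfloor_spec L) as [_ HL].
  assert (HL15 : L + INR j < 15).
  { apply IZR_le in HDS. rewrite !plus_IZR, <- INR_IZR_INZ in HDS. lra. }
  assert (Hx : Rabs x = Rpower 10 L).
  { unfold Rpower, L.
    replace (ln (Rabs x) / ln 10 * ln 10) with (ln (Rabs x))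
      by (field; rewrite <- ln_1; apply Rgt_not_eq, ln_increasing; lra).
    rewrite exp_ln; [reflexivity | now apply Rabs_pos_lt]. }
  apply lt_IZR. rewrite abs_IZR, <- HxS, Rabs_mult, (Rabs_pos_eq (10 ^ j)), Hx
    by (apply pow_le; lra).
  rewrite <- !Rpower_pow, <- Rpower_plus by lra.
  replace (IZR (10 ^ 15)) with (Rpower 10 (INR 15)).
  - apply Rpower_lt; [lra |]. simpl INR. lra.
  - rewrite Rpower_pow by lra. simpl. lra.
Qed.

Lemma is_DF_cases v x : is_DF v x -> v = 0 /\ x = 0 \/ x <> 0 /\ round_ne x = v.
Proof.
  intros [Hzero | [Hv0 [k [s [n [[_ [_ [_ Hround]]] _]]]]]]; [now left | right].
  split; [| exact Hround].
  intros ->. apply Hv0. rewrite <- Hround. apply round_ne_0.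
Qed.

Theorem theorem4 (v x : R) (alpha : nat) :
  is_zero_or_normal_double v ->
  is_DF v x ->
  is_DP x alpha ->
  (alpha <= 22)%nat ->
  (DS_of x alpha <= 15)%Z ->
  (forall i : nat, (i < alpha)%nat -> eps_i v i > mu_i v i) /\
  eps_i v alpha <= mu_i v alpha.
Proof.
  (* Normality of v is implied: v rounds a decimal of magnitude >= 10^-22. *)
  intros _ HDF HDP Halpha HDS.
  destruct (is_DF_cases v x HDF) as [[-> ->] | [Hx0 Hv]].
  - rewrite (is_DP_0 alpha HDP). split; [intros i Hi; lia |].
    unfold eps_i, mu_i, fmul_pow10. rewrite Rmult_0_l, round_ne_0, round_int_IZR.
    rewrite Rminus_0_r, Rabs_R0. lra.
  - pose proof HDP as [[S HxS] _].
    assert (HS0 : S <> 0%Z).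
    { intros ->. apply Rmult_integral in HxS as [| H]; [contradiction |].
      apply (pow_nonzero 10 alpha); lra. }
    pose proof (DS_of_bound x alpha S Hx0 HxS HDS) as HS15.
    split.
    + intros i Hi. apply (mu_lt_eps_below_DP x v alpha S); try assumption.
      apply (is_DP_not_dvd x alpha); [assumption | assumption | lia].
    + apply (eps_le_mu_at_DP x v alpha S); assumption.
Qed.
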